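(* Let $K\subset\mathbb{R}^n$ be a nonempty compact set and $H$ a linear subspace of $\mathbb{R}^n$ with $1\le\dim H\le n-1$. Then the sequence $K_m:=F_H^mK$ ($F_H$ applied $m$ times) converges in the Hausdorff metric to the $H$-symmetric compact set \[L=\bigcup_{x\in H}\mathrm{conv}\big(F_HK\cap(x+H^\perp)\big).\]
   Context: For a linear subspace $H$, $H^\perp$ is its orthogonal complement, $x|H$ the orthogonal projection, and $R_Hx=2(x|H)-x$ the reflection with respect to $H$. Minkowski sum: $X+Y=\{x+y:x\in X,y\in Y\}$, $tX=\{tx\}$. The fiber symmetrization of a compact set $C$ is \[F_HC:=\bigcup_{x\in H}\Big[\tfrac12\big(C\cap(H^\perp+x)\big)+\tfrac12\big(R_HC\cap(H^\perp+x)\big)\Big].\] $\mathrm{conv}$ denotes convex hull. *)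

From HB Require Import structures.
From mathcomp Require Import all_boot all_order all_algebra.
From mathcomp Require Import all_classical all_reals all_analysis.
Set Implicit Arguments. Unset Strict Implicit. Unset Printing Implicit Defensive.
Import Order.TTheory GRing.Theory Num.Theory.
Import numFieldNormedType.Exports.
Local Open Scope classical_set_scope.
Local Open Scope ring_scope.

Section Defs.
Variables (R : realType) (n : nat).
Notation V := 'rV[R]_n.

Definition dotv (u v : V) : R := \sum_(i < n) u 0 i * v 0 i.
Definition enorm (u : V) : R := Num.sqrt (dotv u u).

(* A linear subspace H is given as the row space of a square matrix H. *)
Definition subsp (H : 'M[R]_n) : set V := [set x | (x <= H)%MS].

Definition orthc (H : 'M[R]_n) : set V :=
  [set y | forall h : V, (h <= H)%MS -> dotv y h = 0].

Definition oproj (H : 'M[R]_n) (x : V) : V :=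
  xget 0 [set p : V | (p <= H)%MS /\ orthc H (x - p)].

Definition refl (H : 'M[R]_n) (x : V) : V := 2%:R *: oproj H x - x.

Definition msum (X Y : set V) : set V := [set z | exists x y, X x /\ Y y /\ z = x + y].
Definition sdil (t : R) (X : set V) : set V := [set z | exists x, X x /\ z = t *: x].
Definition strans (X : set V) (x : V) : set V := [set z | exists y, X y /\ z = y + x].

Definition fibsym (H : 'M[R]_n) (C : set V) : set V :=
  \bigcup_(x in subsp H)
     msum (sdil (1/2) (C `&` strans (orthc H) x))
          (sdil (1/2) ((refl H @` C) `&` strans (orthc H) x)).

Definition convexs (C : set V) : Prop :=
  forall x y (t : R), C x -> C y -> 0 <= t -> t <= 1 -> C (t *: x + (1 - t) *: y).
Definition convhull (A : set V) : set V :=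
  [set x | forall C, convexs C -> A `<=` C -> C x].

Definition enbhd (A : set V) (e : R) : set V :=
  [set y | exists a, A a /\ enorm (y - a) <= e].
Definition hdist (A B : set V) : R :=
  inf [set e : R | 0 <= e /\ A `<=` enbhd B e /\ B `<=` enbhd A e].

End Defs.

From HB Require Import structures.
From mathcomp Require Import all_boot all_order all_algebra.
From mathcomp Require Import all_classical all_reals all_analysis.
From mathcomp Require Import ring lra.
Set Implicit Arguments. Unset Strict Implicit. Unset Printing Implicit Defensive.
Import Order.TTheory GRing.Theory Num.Theory.
Import numFieldNormedType.Exports.
Local Open Scope classical_set_scope.
Local Open Scope ring_scope.

(** Write the orthogonal projection onto [H] as [P].  One fiber symmetrization
    maps [C] to the set of points [P a + (a - b)/2] with [a, b] in [C] and
    [P a = P b]; iterating, the fiber of [F_H^(k+1) K] over [x] is [x] plus the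
    set of averages of [2^k] vectors of [S_x = (K_x - K_x)/2], i.e. the dyadic
    convex combinations of the fiber of [F_H K] over [x].  By Caratheodory a
    point of [L] is a convex combination of [n+1] points of one such fiber;
    rounding its weights to multiples of [2^-k] moves it by [O(2^-k)], so the
    Hausdorff distance from [F_H^(k+1) K] to [L] decays geometrically.
    Compactness of [L] comes from writing it as a continuous image of a
    closed subset of the compact set [([0,1] * F_H K)^(n+1)]. *)

Section OrthogonalProjection.
Variables (R : realType) (n : nat).
Notation V := 'rV[R]_n.

Lemma dotvE (u v : V) : dotv u v = (u *m v^T) 0 0.
Proof. by rewrite /dotv mxE; apply: eq_bigr => i _; rewrite mxE. Qed.

Lemma dotvBl (a b c : V) : dotv (a - b) c = dotv a c - dotv b c.
Proof. by rewrite !dotvE mulmxBl !mxE. Qed.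

Lemma mul_tr_self_eq0 k (u : 'rV[R]_k) : (u *m u^T) 0 0 = 0 -> u = 0.
Proof.
rewrite mxE => u2_eq0; apply/rowP => i; rewrite mxE.
have : u 0 i * u^T i 0 = 0.
  by apply: (psumr_eq0P _ u2_eq0) => // j _; rewrite mxE -expr2 sqr_ge0.
by rewrite mxE => /eqP; rewrite mulf_eq0 orbb => /eqP.
Qed.

Lemma row_free_gram_unit m (B : 'M[R]_(m, n)) : row_free B -> B *m B^T \in unitmx.
Proof.
move=> freeB; rewrite -row_free_unit; apply: inj_row_free => v vG0.
have vB0 : v *m B = 0.
  by apply: mul_tr_self_eq0; rewrite trmx_mul -mulmxA (mulmxA B) mulmxA vG0 mul0mx mxE.
by apply: (row_free_inj freeB); rewrite vB0 mul0mx.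
Qed.

Variable H : 'M[R]_n.

Definition projmx : 'M[R]_n :=
  let B := row_base H in B^T *m invmx (B *m B^T) *m B.

Definition hproj : {linear V -> V} := mulmxr projmx.

Lemma hproj_sub v : (hproj v <= H)%MS.
Proof. by rewrite /= /projmx mulmxA (submx_trans (submxMl _ _)) ?eq_row_base. Qed.

Lemma orthc_row_base (y : V) : y *m (row_base H)^T = 0 -> orthc H y.
Proof.
move=> yB0 h; rewrite -(eq_row_base H) => /submxP [w ->].
by rewrite dotvE trmx_mul mulmxA yB0 mul0mx mxE.
Qed.

Lemma hproj_orthc v : orthc H (v - hproj v).
Proof.
apply: orthc_row_base; rewrite /= /projmx.
move: (row_base H) (row_base_free H) => B freeB.
by rewrite mulmxBl -!mulmxA mulVmx ?row_free_gram_unit // mulmx1 subrr.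
Qed.

Lemma orth_decomp_uniq (v p1 p2 : V) : (p1 <= H)%MS -> orthc H (v - p1) ->
  (p2 <= H)%MS -> orthc H (v - p2) -> p1 = p2.
Proof.
move=> p1H o1 p2H o2; apply/eqP; rewrite -subr_eq0; apply/eqP/mul_tr_self_eq0.
have dH : (p1 - p2 <= H)%MS by rewrite addmx_sub // eqmx_opp.
have {1}-> : p1 - p2 = (v - p2) - (v - p1) by rewrite opprB [RHS]addrC addrA subrK.
by rewrite -dotvE dotvBl o1 // o2 // subrr.
Qed.

Lemma oprojE v : oproj H v = hproj v.
Proof.
rewrite /oproj; case: xgetP => [p -> [pH op]|/(_ (hproj v)) []].
  exact: orth_decomp_uniq pH op (hproj_sub v) (hproj_orthc v).
by split; [exact: hproj_sub|exact: hproj_orthc].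
Qed.

Lemma hproj_id h : (h <= H)%MS -> hproj h = h.
Proof.
move=> hH; apply: (orth_decomp_uniq (hproj_sub h) (hproj_orthc h) hH).
by move=> y _; rewrite subrr dotvE mul0mx mxE.
Qed.

Lemma hprojK v : hproj (hproj v) = hproj v.
Proof. exact/hproj_id/hproj_sub. Qed.

Lemma orthcP y : orthc H y <-> hproj y = 0.
Proof.
split=> [oy|y0]; last by have := hproj_orthc y; rewrite y0 subr0.
by apply/esym/(orth_decomp_uniq (sub0mx _ _) _ (hproj_sub y) (hproj_orthc y)); rewrite subr0.
Qed.

Lemma strans_orthcP x z : (x <= H)%MS -> strans (orthc H) x z <-> hproj z = x.
Proof.
move=> xH; split=> [[y [/orthcP y0 ->]]|zx]; first by rewrite linearD y0 add0r hproj_id.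
exists (z - x); split; last by rewrite subrK.
by apply/orthcP; rewrite linearB zx hproj_id // subrr.
Qed.

Lemma reflE v : refl H v = 2%:R *: hproj v - v.
Proof. by rewrite /refl oprojE. Qed.

Lemma hproj_refl v : hproj (refl H v) = hproj v.
Proof. by rewrite reflE linearB linearZZ hprojK scaler_nat mulr2n addrK. Qed.

Lemma reflK v : refl H (refl H v) = v.
Proof. by rewrite reflE hproj_refl reflE opprB addrCA subrr addr0. Qed.

Lemma reflD u v : refl H (u + v) = refl H u + refl H v.
Proof. by rewrite !reflE linearD scalerDr opprD addrACA. Qed.

Lemma reflZ (t : R) v : refl H (t *: v) = t *: refl H v.
Proof. by rewrite !reflE linearZZ scalerBr !scalerA mulrC. Qed.

End OrthogonalProjection.

Section ConvexCombinations.
Variables (R : realType) (n : nat).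
Notation V := 'rV[R]_n.
Implicit Types (A : set V) (p : V).

Definition convcomb A N p := exists (l : 'I_N -> R) (q : 'I_N -> V),
  [/\ forall i, A (q i), forall i, 0 <= l i, \sum_i l i = 1 & p = \sum_i l i *: q i].

Lemma sum_split_ord (T : nmodType) N1 N2 (F : 'I_N1 + 'I_N2 -> T) :
  \sum_(i < N1 + N2) F (fintype.split i) = \sum_i F (inl i) + \sum_i F (inr i).
Proof.
rewrite big_split_ord; congr (_ + _); apply: eq_bigr => i _.
  by rewrite (unsplitK (inl i)).
by rewrite (unsplitK (inr i)).
Qed.

Lemma convcomb0 A p : ~ convcomb A 0 p.
Proof. by case=> l [q [_ _ + _]]; rewrite big_ord0 => /eqP; rewrite eq_sym oner_eq0. Qed.

Lemma convcomb_convhull A N p : convcomb A N p -> convhull A p.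
Proof.
move=> + C convC AC; elim: N p => [p /convcomb0 //|N IH _ [l [q [Aq l_ge0 l1 ->]]]].
rewrite big_ord_recl; move: l1; rewrite big_ord_recl.
set r := \sum_(i < N) l (lift ord0 i) => l1.
have r_ge0 : 0 <= r by rewrite sumr_ge0.
have [r0|r_neq0] := eqVneq r 0.
  have l0 i : l (lift ord0 i) = 0 by rewrite (psumr_eq0P _ r0).
  rewrite big1 => [|i _]; last by rewrite l0 scale0r.
  by move: l1; rewrite r0 addr0 => ->; rewrite scale1r addr0; apply/AC/Aq.
have Cq : C (\sum_(i < N) (r^-1 * l (lift ord0 i)) *: q (lift ord0 i)).
  apply: IH; exists (fun i => r^-1 * l (lift ord0 i)), (fun i => q (lift ord0 i)).
  by split=> // [i|]; rewrite ?mulr_ge0 ?invr_ge0 // -mulr_sumr mulVf.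
have := convC _ _ r Cq (AC _ (Aq ord0)) r_ge0.
have -> : r *: \sum_(i < N) (r^-1 * l (lift ord0 i)) *: q (lift ord0 i) =
    \sum_(i < N) l (lift ord0 i) *: q (lift ord0 i).
  by rewrite scaler_sumr; apply: eq_bigr => i _; rewrite scalerA mulrA mulfV ?mul1r.
have -> : 1 - r = l ord0 by rewrite -l1 addrK.
by rewrite addrC; apply; rewrite -l1 lerDr.
Qed.

Lemma convexs_convcomb A : convexs [set p | exists N, convcomb A N p].
Proof.
move=> _ _ t [N1 [l1 [q1 [Aq1 l1_ge0 l1_1 ->]]]] [N2 [l2 [q2 [Aq2 l2_ge0 l2_1 ->]]]] t0 t1.
pose l s := match s with inl j => t * l1 j | inr j => (1 - t) * l2 j end.
pose q s := match s with inl j => q1 j | inr j => q2 j end.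
exists (N1 + N2)%N, (l \o fintype.split), (q \o fintype.split); split.
- by move=> i /=; case: fintype.split.
- by move=> i /=; case: fintype.split => j; rewrite mulr_ge0 ?subr_ge0.
- by rewrite (sum_split_ord l) /= -!mulr_sumr l1_1 l2_1 !mulr1 subrKC.
rewrite (sum_split_ord (fun s => l s *: q s)) /= !scaler_sumr.
by congr (_ + _); apply: eq_bigr => i _; rewrite scalerA.
Qed.

Lemma convhull_convcomb A p : convhull A p -> exists N, convcomb A N p.
Proof.
move/(_ _ (@convexs_convcomb A)); apply=> a Aa; exists 1%N, (fun=> 1), (fun=> a).
by split=> //; rewrite big_ord1 ?scale1r.
Qed.

Lemma convcomb_widen A N M p : (N <= M)%N -> convcomb A N p -> convcomb A M p.
Proof.
case: N => [_ /convcomb0 //|N NM [l [q [Aq l_ge0 l1 ->]]]].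
have [d ->] : exists d, M = (N.+1 + d)%N by exists (M - N.+1)%N; rewrite subnKC.
pose l' (s : 'I_N.+1 + 'I_d) := match s with inl j => l j | inr _ => 0 end.
pose q' (s : 'I_N.+1 + 'I_d) := match s with inl j => q j | inr _ => q ord0 end.
exists (l' \o fintype.split), (q' \o fintype.split); split.
- by move=> i /=; case: fintype.split => *; apply: Aq.
- by move=> i /=; case: fintype.split.
- by rewrite (sum_split_ord l') /= big1_eq addr0.
rewrite (sum_split_ord (fun s => l' s *: q' s)) /= [X in _ + X]big1 ?addr0 //.
by move=> i _; rewrite scale0r.
Qed.

Lemma affine_dependence N (q : 'I_N -> V) : (n.+1 < N)%N ->
  exists mu : 'I_N -> R, [/\ \sum_i mu i = 0, \sum_i mu i *: q i = 0 & exists j, 0 < mu j].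
Proof.
(* The [N] rows [(q i, 1)] of [Q] live in dimension [n + 1 < N]. *)
move=> nN; pose Q := row_mx (\matrix_i q i) (const_mx 1 : 'M[R]_(N, 1)).
have [v vQ v0] : exists2 v : 'rV[R]_N, v *m Q = 0 & v != 0.
  case: (pselect (exists2 v : 'rV[R]_N, v *m Q = 0 & v != 0)) => // indep.
  suff /eqP rkQ : row_free Q.
    by exfalso; move: nN; rewrite -rkQ ltnNge (leq_trans (rank_leq_col Q)) ?addn1.
  apply: inj_row_free => v vQ; apply/eqP/negPn/negP => v0; apply: indep; by exists v.
have [j vj] : exists j, v 0 j != 0.
  case: (pselect (exists j, v 0 j != 0)) => // v_eq0; case/eqP: v0.
  by apply/rowP => j; rewrite mxE; apply/eqP/negPn/negP => vj; apply: v_eq0; exists j.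
move: vQ; rewrite mul_mx_row => /eqP; rewrite row_mx_eq0 => /andP [/eqP vq /eqP v1].
have v_sum : \sum_i v 0 i = 0.
  have := congr1 (fun M : 'M[R]_1 => M 0 0) v1; rewrite !mxE => e.
  by rewrite -[RHS]e; apply: eq_bigr => i _; rewrite mxE mulr1.
have v_comb : \sum_i v 0 i *: q i = 0.
  by rewrite -[RHS]vq mulmx_sum_row; apply: eq_bigr => i _; rewrite rowK.
exists (fun i => v 0 j * v 0 i); split.
- by rewrite -mulr_sumr v_sum mulr0.
- by under eq_bigr do rewrite -scalerA; rewrite -scaler_sumr v_comb scaler0.
- by exists j; rewrite lt0r mulf_neq0 //= -expr2 sqr_ge0.
Qed.

Lemma convcomb_reduce A N p : (n.+1 < N.+1)%N -> convcomb A N.+1 p -> convcomb A N p.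
Proof.
move=> nN [l [q [Aq l_ge0 l1 ->]]].
have [mu [mu0 muq0 [j mu_j]]] := affine_dependence q nN.
have [j0 mu_j0 min_j0] := @arg_minP _ R _ j (fun i => 0 < mu i) (fun i => l i / mu i) mu_j.
(* Move against [mu] by the largest step [t] keeping all weights nonnegative:
   the weight of [q j0] drops to zero. *)
set t := l j0 / mu j0; pose l' i := l i - t * mu i.
have l'_ge0 i : 0 <= l' i.
  rewrite subr_ge0; have [mu_i|] := ltP 0 (mu i); first by rewrite -ler_pdivlMr ?min_j0.
  by move/(mulr_ge0_le0 (divr_ge0 (l_ge0 j0) (ltW mu_j0)))/le_trans; apply.
have l'_j0 : l' j0 = 0 by rewrite /l' /t divfK ?subrr ?gt_eqF.
have l'_1 : \sum_i l' i = 1 by rewrite sumrB -mulr_sumr mu0 mulr0 subr0.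
have comb_l' : \sum_i l' i *: q i = \sum_i l i *: q i.
  under eq_bigr do rewrite scalerBl -scalerA.
  by rewrite sumrB -scaler_sumr muq0 scaler0 subr0.
exists (l' \o lift j0), (q \o lift j0); split=> [i|i||] /=; rewrite ?l'_ge0 //.
  by move: l'_1; rewrite (bigD1_ord j0) //= l'_j0 add0r.
by rewrite -comb_l' (bigD1_ord j0) //= l'_j0 scale0r add0r.
Qed.

Theorem caratheodory A p : convhull A p -> convcomb A n.+1 p.
Proof.
case/convhull_convcomb => N; elim: N => [/convcomb0 //|N IH].
move=> comb; have [Nn|nN] := leqP N.+1 n.+1; first exact: convcomb_widen Nn comb.
exact/IH/(convcomb_reduce nN).
Qed.

End ConvexCombinations.

Section DyadicAverages.
Variables (R : realType) (n : nat).
Notation V := 'rV[R]_n.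

Fixpoint midpoints (k : nat) (A : set V) : set V :=
  if k is k'.+1 then
    [set z | exists u w, [/\ midpoints k' A u, midpoints k' A w & z = 2^-1 *: (u + w)]]
  else A.

Lemma midpoints_sub k (A B : set V) : A `<=` B ->
  (forall u w, B u -> B w -> B (2^-1 *: (u + w))) -> midpoints k A `<=` B.
Proof.
move=> AB midB; elim: k => [//|k IH] _ [u [w [Mu Mw ->]]].
by apply: midB; apply: IH.
Qed.

Lemma midpointsN k (A : set V) : (forall u, A u -> A (- u)) ->
  forall u, midpoints k A u -> midpoints k A (- u).
Proof.
move=> AN; elim: k => [//|k IH] _ [u [w [Mu Mw ->]]].
by exists (- u), (- w); split; [exact: IH|exact: IH|rewrite -scalerN opprD].
Qed.

Lemma midpoints_mean k A (s : seq V) : size s = (2 ^ k)%N -> {in s, forall x, A x} ->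
  midpoints k A ((2 ^ k)%:R^-1 *: \sum_(x <- s) x).
Proof.
elim: k s => [|k IH] s size_s sA.
  case: s size_s sA => [|a []] // _ /(_ a (mem_head _ _)) Aa.
  by rewrite big_seq1 invr1 scale1r.
have size_take : size (take (2 ^ k) s) = (2 ^ k)%N.
  by rewrite size_takel // size_s expnS mul2n -addnn leq_addr.
have size_drop : size (drop (2 ^ k) s) = (2 ^ k)%N.
  by rewrite size_drop size_s expnS mul2n -addnn addnK.
exists ((2 ^ k)%:R^-1 *: \sum_(x <- take (2 ^ k) s) x).
exists ((2 ^ k)%:R^-1 *: \sum_(x <- drop (2 ^ k) s) x); split.
- by apply: IH => // x /mem_take; apply: sA.
- by apply: IH => // x /mem_drop; apply: sA.
by rewrite -scalerDr -big_cat cat_take_drop scalerA -invfM -natrM -expnS.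
Qed.

Lemma sum_nseq_id m (a : V) : \sum_(x <- nseq m a) x = m%:R *: a.
Proof.
elim: m => [|m IH]; first by rewrite big_nil scale0r.
by rewrite big_cons IH mulrS scalerDl scale1r.
Qed.

Lemma midpoints_dyadic k A N (c : 'I_N -> nat) (s : 'I_N -> V) :
  (forall i, A (s i)) -> (\sum_i c i)%N = (2 ^ k)%N ->
  midpoints k A (\sum_i ((c i)%:R / (2 ^ k)%:R) *: s i).
Proof.
move=> As c_sum; pose t := flatten [seq nseq (c i) (s i) | i <- enum 'I_N].
have -> : \sum_i ((c i)%:R / (2 ^ k)%:R) *: s i = (2 ^ k)%:R^-1 *: \sum_(x <- t) x.
  rewrite big_flatten big_map big_enum scaler_sumr /=; apply: eq_bigr => i _.
  by rewrite sum_nseq_id scalerA mulrC.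
apply: midpoints_mean => [|x /flatten_mapP [i _ /nseqP [-> _]] //].
rewrite size_flatten /shape -map_comp -c_sum sumnE big_map big_enum /=.
by apply: eq_bigr => i _; rewrite size_nseq.
Qed.

Lemma truncn_div_bounds (x D : R) : 0 <= x -> 0 < D ->
  (Num.truncn (x * D))%:R / D <= x < (Num.truncn (x * D))%:R / D + D^-1.
Proof.
move=> x_ge0 D_gt0; have /andP [lo hi] := truncn_itv (mulr_ge0 x_ge0 (ltW D_gt0)).
set f := Num.truncn (x * D) in lo hi *.
have -> : f%:R / D + D^-1 = f.+1%:R / D by rewrite -natr1 mulrDl mul1r.
by rewrite ler_pdivrMr // ltr_pdivlMr // lo hi.
Qed.

Lemma dyadic_rounding m (l : 'I_m.+1 -> R) k : (forall i, 0 <= l i) -> \sum_i l i = 1 ->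
  exists c : 'I_m.+1 -> nat, (\sum_i c i)%N = (2 ^ k)%N /\
    \sum_i `|l i - (c i)%:R / (2 ^ k)%:R| <= (2 * m)%:R / (2 ^ k)%:R.
Proof.
move=> l_ge0 l_1; set D : R := (2 ^ k)%:R.
have D_gt0 : 0 < D by rewrite ltr0n expn_gt0.
pose f i := Num.truncn (l i * D).
have f_bounds i : (f i)%:R / D <= l i < (f i)%:R / D + D^-1 := truncn_div_bounds (l_ge0 i) D_gt0.
pose w := widen_ord (leqnSn m).
pose e := \sum_(i < m) (l (w i) - (f (w i))%:R / D).
have e_ge0 : 0 <= e.
  by apply: sumr_ge0 => i _; rewrite subr_ge0; case/andP: (f_bounds (w i)).
have e_le : e <= m%:R / D.
  rewrite mulr_natl -[in X in _ *+ X](card_ord m) -sumr_const; apply: ler_sum => i _.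
  by case/andP: (f_bounds (w i)) => _; rewrite -ltrBlDl => /ltW.
pose F := (\sum_(i < m) f (w i))%N.
have FD : F%:R / D = \sum_(i < m) (f (w i))%:R / D by rewrite natr_sum mulr_suml.
have F_le : (F <= 2 ^ k)%N.
  rewrite -(ler_nat R) -/D -[leRHS]mul1r -ler_pdivrMr // FD -[leRHS]l_1 big_ord_recr /=.
  apply: ler_wpDr; first exact: l_ge0.
  by apply: ler_sum => i _; case/andP: (f_bounds (w i)).
(* Round all weights but the last one down; the last one absorbs the total
   deficit [e], so its own error is [e] as well. *)
exists (fun i : 'I_m.+1 => if (i < m)%N then f i else (2 ^ k - F)%N); split.
  rewrite big_ord_recr /= ltnn (eq_bigr (fun i => f (w i))) ?subnKC //.
  by move=> i _; rewrite ltn_ord.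
rewrite big_ord_recr /= ltnn (eq_bigr (fun i => l (w i) - (f (w i))%:R / D)); last first.
  move=> i _; rewrite ltn_ord ger0_norm // subr_ge0.
  by case/andP: (f_bounds (w i)).
have -> : l ord_max - (2 ^ k - F)%N%:R / D = - e.
  have l_max : l ord_max = 1 - \sum_(i < m) l (w i).
    by rewrite -l_1 big_ord_recr /= addrAC subrr add0r.
  rewrite natrB // mulrBl divff ?gt_eqF // FD l_max /e sumrB; lra.
by rewrite -/e normrN ger0_norm // natrM mulr_natl mulr2n mulrDl lerD.
Qed.

End DyadicAverages.

Section FiberSymmetrization.
Variables (R : realType) (n : nat) (H : 'M[R]_n).
Notation V := 'rV[R]_n.
Notation hproj := (hproj H).

Lemma fibsymE (C : set V) z : fibsym H C z <->
  exists a b, [/\ C a, C b, hproj a = hproj b & z = hproj a + 2^-1 *: (a - b)].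
Proof.
split.
  case=> x xH [_ [_ [[a [[Ca /(strans_orthcP _ xH) ax] ->]]
                    [[_ [[[b Cb <-] /(strans_orthcP _ xH) bx] ->]] ->]]]].
  exists a, b; rewrite -(hproj_refl H b) bx ax; split=> //.
  rewrite reflE -(hproj_refl H b) bx div1r !scalerBr scalerA mulVf ?pnatr_eq0 //.
  by rewrite scale1r addrCA.
case=> a [b [Ca Cb ab ->]]; exists (hproj a); first exact: hproj_sub.
exists ((1/2) *: a), ((1/2) *: refl H b); split; [|split].
- by exists a; split=> //; split=> //; apply/(strans_orthcP _ (hproj_sub H a)).
- exists (refl H b); split=> //; split; first by exists b.
  by apply/(strans_orthcP _ (hproj_sub H a)); rewrite hproj_refl.
rewrite reflE -ab div1r !scalerBr scalerA mulVf ?pnatr_eq0 //.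
by rewrite scale1r addrCA.
Qed.

Lemma fibsym_refl (C : set V) z : fibsym H C z -> fibsym H C (refl H z).
Proof.
case/fibsymE=> a [b [Ca Cb ab ->]]; apply/fibsymE; exists b, a; split=> //.
rewrite reflE linearD linearZZ linearB hprojK -ab subrr scaler0 addr0 scaler_nat mulr2n.
by rewrite opprD addrACA subrr add0r -scalerN opprB.
Qed.

Variable K : set V.

Definition half_diffs (x : V) : set V :=
  [set s | exists a b, [/\ K a, K b, hproj a = x, hproj b = x & s = 2^-1 *: (a - b)]].

Definition fibsym_iterate k : set V :=
  [set z | exists2 x, (x <= H)%MS & exists2 u, midpoints k (half_diffs x) u & z = x + u].

Lemma midpoints_half_diffs_proj k x u : midpoints k (half_diffs x) u -> hproj u = 0.
Proof.
move: u; apply: midpoints_sub => [_ [a [b [_ _ ax bx ->]]]|u w u0 w0].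
  by rewrite linearZZ linearB ax bx subrr scaler0.
by rewrite linearZZ linearD u0 w0 addr0 scaler0.
Qed.

Lemma midpoints_half_diffsN k x u :
  midpoints k (half_diffs x) u -> midpoints k (half_diffs x) (- u).
Proof.
apply: midpointsN => _ [a [b [Ka Kb ax bx ->]]].
by exists b, a; split=> //; rewrite -scalerN opprB.
Qed.

Lemma hproj_fibsym_iterate k x u : (x <= H)%MS ->
  midpoints k (half_diffs x) u -> hproj (x + u) = x.
Proof. by move=> xH /midpoints_half_diffs_proj u0; rewrite linearD u0 addr0 hproj_id. Qed.

Lemma fibsym_iterate_fiber k x z : (x <= H)%MS -> fibsym_iterate k z -> hproj z = x ->
  midpoints k (half_diffs x) (z - x).
Proof.
move=> xH [y yH [u Mu ->]]; rewrite (hproj_fibsym_iterate yH Mu) => <-.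
by rewrite addrC addKr.
Qed.

Lemma fibsym_iterate0 : fibsym H K = fibsym_iterate 0.
Proof.
apply/seteqP; split=> z.
  case/fibsymE=> a [b [Ka Kb ab ->]]; exists (hproj a); first exact: hproj_sub.
  by exists (2^-1 *: (a - b)) => //; exists a, b; split.
case=> x xH [_ [a [b [Ka Kb ax bx ->]]] ->].
by apply/fibsymE; exists a, b; split; rewrite ?ax ?bx.
Qed.

Lemma fibsym_iterateS k : fibsym H (fibsym_iterate k) = fibsym_iterate k.+1.
Proof.
apply/seteqP; split=> z.
  case/fibsymE=> _ [_ [[x xH [u Mu ->]] [y yH [w Mw ->]] + ->]].
  rewrite (hproj_fibsym_iterate xH Mu) (hproj_fibsym_iterate yH Mw) => xy; subst y.
  exists x => //; exists (2^-1 *: (u + - w)) => /=.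
    by exists u, (- w); split=> //; apply: midpoints_half_diffsN.
  by rewrite opprD addrACA subrr add0r.
case=> x xH [_ [u [w [Mu Mw ->]]] ->].
apply/fibsymE; exists (x + u), (x - w).
have Mw' := midpoints_half_diffsN Mw.
rewrite (hproj_fibsym_iterate xH Mu) -[x - w]/(x + - w) (hproj_fibsym_iterate xH Mw').
split=> //.
- by exists x => //; exists u.
- by exists x => //; exists (- w).
by rewrite opprD opprK addrACA subrr add0r.
Qed.

Lemma iter_fibsymE k : iter k.+1 (fibsym H) K = fibsym_iterate k.
Proof.
elim: k => [|k IH]; first exact: fibsym_iterate0.
by rewrite iterS IH fibsym_iterateS.
Qed.

End FiberSymmetrization.

Lemma fst_continuous {U W : topologicalType} : continuous (@fst U W).
Proof. by case=> x y; exact: cvg_fst. Qed.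

Lemma snd_continuous {U W : topologicalType} : continuous (@snd U W).
Proof. by case=> x y; exact: cvg_snd. Qed.

Lemma continuous_compose {T U W : topologicalType} (f : T -> U) (g : U -> W) :
  continuous f -> continuous g -> continuous (fun x => g (f x)).
Proof. by move=> fc gc x; exact: continuous_comp (fc x) (gc (f x)). Qed.

Section Continuity.
Variable R : realType.

Context {T : topologicalType} {W : normedModType R}.

Lemma continuousD_fun (f g : T -> W) : continuous f -> continuous g ->
  continuous (fun x => f x + g x).
Proof. by move=> fc gc x; exact: continuousD (fc x) (gc x). Qed.

Lemma continuousB_fun (f g : T -> W) : continuous f -> continuous g ->
  continuous (fun x => f x - g x).
Proof. by move=> fc gc x; exact: continuousB (fc x) (gc x). Qed.

Lemma continuousZ_fun (s : T -> R) (f : T -> W) : continuous s -> continuous f ->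
  continuous (fun x => s x *: f x).
Proof. by move=> sc fc x; exact: continuousZ (sc x) (fc x). Qed.

Lemma continuous_sum I (s : seq I) (F : I -> T -> W) : (forall i, continuous (F i)) ->
  continuous (fun x => \sum_(i <- s) F i x).
Proof.
move=> Fc; elim: s => [|i s IH].
  by under eq_fun do rewrite big_nil; exact: cst_continuous.
by under eq_fun do rewrite big_cons; apply: continuousD_fun.
Qed.

Lemma closed_eqfun (f g : T -> W) : continuous f -> continuous g ->
  closed [set t | f t = g t].
Proof.
move=> fc gc; have -> : [set t | f t = g t] = (fun t => `|f t - g t|) @^-1` [set 0].
  by apply/seteqP; split=> t /=; [move->; rewrite subrr normr0|move/normr0_eq0/subr0_eq].
apply: preimage_closed; last exact: closed_eq.
by move=> t _; exact: (continuous_compose (continuousB_fun fc gc) (@norm_continuous _ W)).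
Qed.

End Continuity.

Lemma mulmx_continuous (R : realType) m n (M : 'M[R]_(m, n)) :
  continuous (fun v : 'rV[R]_m => v *m M).
Proof.
have -> : (fun v : 'rV[R]_m => v *m M) = (fun v => \sum_(i <- index_enum 'I_m) v 0 i *: row i M).
  by apply: funext => v; rewrite mulmx_sum_row.
apply: continuous_sum => i v; apply: continuousZr_tmp; exact: coord_continuous.
Qed.

Section FiberHulls.
Variables (R : realType) (n : nat) (H : 'M[R]_n).
Notation V := 'rV[R]_n.
Notation hproj := (hproj H).

Definition fiber_hulls (C : set V) : set V :=
  \bigcup_(x in subsp H) convhull (C `&` strans (orthc H) x).

Lemma fiber_hulls_refl (C : set V) : (forall z, C z -> C (refl H z)) ->
  refl H @` fiber_hulls C = fiber_hulls C.
Proof.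
move=> C_refl; have sub : refl H @` fiber_hulls C `<=` fiber_hulls C.
  move=> _ [p [x xH hull_p] <-]; exists x => // D convD CD.
  apply: (hull_p [set z | D (refl H z)]) => [a b t Da Db t0 t1|z [Cz /(strans_orthcP _ xH) zx]] /=.
    by rewrite reflD !reflZ; apply: convD.
  by apply: CD; split; [exact: C_refl|apply/(strans_orthcP _ xH); rewrite hproj_refl].
apply/seteqP; split=> // p hull_p; exists (refl H p); last exact: reflK.
by apply: sub; exists p.
Qed.

Lemma hproj_continuous : continuous hproj.
Proof. exact: mulmx_continuous. Qed.

Lemma compact_fibsym (C : set V) : compact C -> compact (fibsym H C).
Proof.
move=> cC; pose g (ab : V * V) := hproj ab.1 + 2^-1 *: (ab.1 - ab.2).
have -> : fibsym H C = g @` (C `*` C `&` [set ab | hproj ab.1 = hproj ab.2]).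
  apply/seteqP; split=> z; first by case/fibsymE=> a [b [Ca Cb ab ->]]; exists (a, b).
  by case=> -[a b] [[/= Ca Cb] /= ab] <-; apply/fibsymE; exists a, b.
apply: continuous_compact.
  apply/continuous_subspaceT/continuousD_fun.
    exact: continuous_compose fst_continuous hproj_continuous.
  apply: continuousZ_fun; first exact: cst_continuous.
  by apply: continuousB_fun; [exact: fst_continuous|exact: snd_continuous].
apply: compact_closedI; first exact: compact_setX.
by apply: closed_eqfun; apply: continuous_compose hproj_continuous;
  [exact: fst_continuous|exact: snd_continuous].
Qed.


Local Notation tuples := (prod_topology (fun _ : 'I_n.+1 => (R * V)%type)).

Lemma proj_tuple_continuous (i : 'I_n.+1) : continuous (fun f : tuples => f i).
Proof. by move=> f; exact: (@proj_continuous _ (fun _ => (R * V)%type) i f). Qed.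

Definition convcomb_tuples (C : set V) : set tuples :=
  [set f | forall i, (`[0, 1]%classic `*` C) (f i)] `&` [set f | \sum_i (f i).1 = 1] `&`
  \bigcap_(i in [set: 'I_n.+1]) [set f | hproj (f i).2 = hproj (f ord0).2].

Lemma fiber_hullsE (C : set V) :
  fiber_hulls C = (fun f : tuples => \sum_i (f i).1 *: (f i).2) @` convcomb_tuples C.
Proof.
apply/seteqP; split=> p.
  case=> x xH /caratheodory [l [q [Cq l_ge0 l_1 ->]]].
  have qx i : hproj (q i) = x by case: (Cq i) => _ /(strans_orthcP _ xH).
  exists (fun i => (l i, q i)) => //; split; last first.
    by move=> i _; exact: etrans (qx i) (esym (qx ord0)).
  split=> // i; split=> /=; last by case: (Cq i).
  by rewrite in_itv /= l_ge0 -l_1 (bigD1 i) //= lerDl sumr_ge0.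
case=> f [[box f_1] fiberwise] <-; exists (hproj (f ord0).2); first exact: hproj_sub.
apply: convcomb_convhull; exists (fun i => (f i).1), (fun i => (f i).2); split=> //.
- move=> i; split; first by case: (box i).
  by apply/(strans_orthcP _ (hproj_sub _ _)); exact: fiberwise.
- by move=> i; case: (box i) => /=; rewrite in_itv /= => /andP [].
Qed.

Lemma compact_fiber_hulls (C : set V) : compact C -> compact (fiber_hulls C).
Proof.
move=> cC; rewrite fiber_hullsE; apply: continuous_compact.
  apply/continuous_subspaceT/continuous_sum => i; apply: continuousZ_fun.
    exact: continuous_compose (proj_tuple_continuous (i := i)) fst_continuous.
  exact: continuous_compose (proj_tuple_continuous (i := i)) snd_continuous.
apply: compact_closedI.
  apply: compact_closedI.
    apply: (@tychonoff _ (fun=> (R * V)%type) (fun=> `[0, 1]%classic `*` C)) => i.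
    by apply: compact_setX; [exact: segment_compact|exact: cC].
  apply: closed_eqfun; last exact: cst_continuous.
  apply: continuous_sum => i.
  exact: continuous_compose (proj_tuple_continuous (i := i)) fst_continuous.
apply: closed_bigI => i _; apply: closed_eqfun; apply: continuous_compose hproj_continuous.
  exact: continuous_compose (proj_tuple_continuous (i := i)) snd_continuous.
exact: continuous_compose (proj_tuple_continuous (i := ord0)) snd_continuous.
Qed.

End FiberHulls.

Section Distances.
Variables (R : realType) (n : nat).
Notation V := 'rV[R]_n.

Lemma norm_entry_le (v : V) i : `|v 0 i| <= `|v|.
Proof.
rewrite [leRHS]/Num.norm /= mx_normrE; apply/bigmax_geP; right => /=.
by exists (0, i).
Qed.

Lemma enorm_le_norm (v : V) : enorm v <= n%:R * `|v|.
Proof.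
rewrite /enorm -[leRHS]ger0_norm ?mulr_ge0 // -sqrtr_sqr ler_sqrt ?sqr_ge0 //.
apply: (@le_trans _ _ (`|v| ^+ 2 *+ n)).
  rewrite -[in X in _ *+ X](card_ord n) -sumr_const /dotv; apply: ler_sum => i _.
  by rewrite -expr2 -real_normK ?num_real // lerXn2r ?nnegrE ?norm_entry_le.
rewrite exprMn -mulr_natl ler_wpM2r ?sqr_ge0 // -natrX ler_nat.
by case: n => // m; rewrite leq_pmulr.
Qed.

Lemma norm_comb_le (I : finType) (a : I -> R) (s : I -> V) M :
  (forall i, `|s i| <= M) -> `|\sum_i a i *: s i| <= (\sum_i `|a i|) * M.
Proof.
move=> sM; rewrite mulr_suml; apply: (le_trans (ler_norm_sum _ _ _)).
by apply: ler_sum => i _; rewrite normrZ ler_wpM2l.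
Qed.

Lemma hdist_le (A B : set V) e : 0 <= e -> A `<=` enbhd B e -> B `<=` enbhd A e ->
  0 <= hdist A B <= e.
Proof.
move=> e_ge0 AB BA; have Ee : [set e | 0 <= e /\ A `<=` enbhd B e /\ B `<=` enbhd A e] e by [].
apply/andP; split; first by apply: lb_le_inf; [exists e|move=> x []].
by apply: ge_inf => //; exists 0 => x [].
Qed.

Lemma enorm0 : enorm (0 : V) = 0.
Proof. by rewrite /enorm /dotv big1 ?sqrtr0 // => i _; rewrite mxE mul0r. Qed.

End Distances.

Section Convergence.
Variables (R : realType) (n : nat) (H : 'M[R]_n).
Notation V := 'rV[R]_n.

Variable K : set V.

Lemma iter_fibsym_sub_hulls k : iter k.+1 (fibsym H) K `<=` fiber_hulls H (fibsym H K).
Proof.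
rewrite iter_fibsymE => _ [x xH [u Mu ->]]; exists x => // C convC sub.
move: u Mu; apply: (midpoints_sub (B := [set u | C (x + u)])) => [s Ss|u w Cu Cw] /=.
  apply: sub; split; first by rewrite fibsym_iterate0; exists x => //; exists s.
  by apply/(strans_orthcP _ xH); rewrite (hproj_fibsym_iterate (k := 0) xH Ss).
have -> : x + 2^-1 *: (u + w) = 2^-1 *: (x + u) + (1 - 2^-1) *: (x + w).
  by apply/rowP => i; rewrite !mxE; lra.
by apply: convC => //; lra.
Qed.

Hypothesis cK : compact K.

Lemma half_diffs_bounded : exists M, 0 <= M /\ forall x s, half_diffs H K x s -> `|s| <= M.
Proof.
have [M [_ KM]] := compact_bounded cK.
have KM1 a : K a -> `|a| <= Num.max (M + 1) 0.
  by move=> Ka; rewrite le_max (KM (M + 1) _ a Ka) ?ltrDl.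
exists (Num.max (M + 1) 0); split=> [|x _ [a [b [Ka Kb _ _ ->]]]].
  by rewrite le_max lexx orbT.
rewrite normrZ ger0_norm // mulrC ler_pdivrMr // mulr_natr mulr2n.
by apply: (le_trans (ler_normB _ _)); rewrite lerD ?KM1.
Qed.

Lemma fiber_hulls_approx : exists2 B, 0 <= B & forall k p, fiber_hulls H (fibsym H K) p ->
  exists2 z, iter k.+1 (fibsym H) K z & enorm (p - z) <= B / (2 ^ k)%:R.
Proof.
have [M [M_ge0 sM]] := half_diffs_bounded.
exists ((2 * n * n)%:R * M); first by rewrite mulr_ge0.
move=> k _ [x xH /caratheodory [l [q [Cq l_ge0 l_1 ->]]]]; set D : R := (2 ^ k)%:R.
pose s i := q i - x.
have Ss i : half_diffs H K x (s i).
  case: (Cq i) => Fq /(strans_orthcP _ xH) qx.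
  by apply: (fibsym_iterate_fiber (k := 0) xH) qx; rewrite -fibsym_iterate0.
have [c [c_sum c_err]] := dyadic_rounding k l_ge0 l_1.
exists (x + \sum_i ((c i)%:R / D) *: s i).
  rewrite iter_fibsymE; exists x => //; exists (\sum_i ((c i)%:R / D) *: s i) => //.
  exact: midpoints_dyadic.
have -> : \sum_i l i *: q i = x + \sum_i l i *: s i.
  apply/eqP; rewrite addrC -subr_eq; apply/eqP.
  by under [RHS]eq_bigr do rewrite scalerBr; rewrite sumrB -scaler_suml l_1 scale1r.
rewrite opprD addrACA subrr add0r -sumrB (eq_bigr _ (fun i _ => esym (scalerBl _ _ _))).
apply: (le_trans (enorm_le_norm _)).
apply: (le_trans (ler_wpM2l (ler0n _ _) (norm_comb_le _ (fun i => sM _ _ (Ss i))))).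
apply: (le_trans (ler_wpM2l (ler0n _ _) (ler_wpM2r M_ge0 c_err))).
by rewrite !natrM -/D [leRHS](_ : _ = n%:R * (2 * n%:R / D * M)) //; ring.
Qed.

Lemma hdist_iter_fibsym_le : exists B, forall k,
  0 <= hdist (iter k.+1 (fibsym H) K) (fiber_hulls H (fibsym H K)) <= B * 2^-1 ^+ k.
Proof.
have [B B_ge0 approx] := fiber_hulls_approx.
exists B => k; rewrite exprVn -natrX; apply: hdist_le; first by rewrite divr_ge0.
  move=> z Fz; exists z; split; first exact: iter_fibsym_sub_hulls Fz.
  by rewrite subrr enorm0 divr_ge0.
by move=> p /(approx k) [z Fz pz]; exists z.
Qed.

End Convergence.

Theorem corollary7 (R : realType) (n : nat) (K : set 'rV[R]_n) (H : 'M[R]_n) :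
  compact K -> K !=set0 ->
  (1 <= \rank H)%N -> (\rank H <= n.-1)%N ->
  let L := \bigcup_(x in subsp H) convhull (fibsym H K `&` strans (orthc H) x) in
  [/\ compact L, refl H @` L = L &
      (fun m : nat => hdist (iter m (fibsym H) K) L) @ \oo --> (0 : R)].
Proof.
move=> cK _ _ _ L.
split; first exact/compact_fiber_hulls/compact_fibsym.
  by apply: fiber_hulls_refl => z; exact: fibsym_refl.
have [B B_bound] := hdist_iter_fibsym_le H cK.
rewrite -cvg_shiftS; apply: (squeeze_cvgr _ (cvg_cst 0) (cvg_geometric B _)).
  exact: nearW B_bound.
by rewrite gtr0_norm ?invr_gt0 // invf_lt1 ?ltr1n.
Qed.
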